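(* Let $\mathcal T$ be a finite trajectory set, $\mathcal Z$ a finite context set, $u:\mathcal T\times\mathcal Z\to\mathbb R$, $z_k\in\mathcal Z$, $\epsilon\in[0,1]$, and $P'(z)=(1-\epsilon)\mathbb I\{z=z_k\}+\epsilon R(z)$ for some distribution $R$ on $\mathcal Z$. Let $BC(\tau)=BC_{\delta_{z_k}}(\tau)=\frac1{|\mathcal T|}\sum_{\tau'\in\mathcal T}O_u(\tau,\tau',z_k)$ and $BC'(\tau)=BC_{P'}(\tau)$. For $\alpha'>0$ define distributions on $\mathcal T$ by $p_{z_k}(\tau)=\exp(BC(\tau)/\alpha')/Z$ and $q_{z_k}(\tau)=\exp(BC'(\tau)/\alpha')/Z'$ with $Z=\sum_\tau\exp(BC(\tau)/\alpha')$, $Z'=\sum_\tau\exp(BC'(\tau)/\alpha')$. Then $$\mathrm{KL}(p_{z_k}\,\|\,q_{z_k})\le\frac{\epsilon^2}{2\alpha'^2}.$$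
   Context: $O_u(a,b,z)=\tfrac12$ if $u(a,z)=u(b,z)$, $1$ if $u(a,z)>u(b,z)$, $0$ otherwise. For a distribution $P$ on $\mathcal Z$, $BC_P(a)=\frac{1}{|\mathcal T|}\sum_{b\in\mathcal T}\mathbb E_{z\sim P}[O_u(a,b,z)]$; $\delta_{z_k}$ is the point mass at $z_k$. Interpretation: $p_{z_k}$ approximates the maximum-entropy optimal trajectory distribution (temperature $\alpha'$) for $u(\cdot,z_k)$ and $q_{z_k}$ that for the learned utility trained on data whose contexts follow $P'$, with $\epsilon$ the misassignment probability of the encoder. *)

From mathcomp Require Import all_boot all_order all_algebra.
From mathcomp Require Import reals.
From mathcomp Require Import sequences exp.
Set Implicit Arguments. Unset Strict Implicit. Unset Printing Implicit Defensive.
Import Order.TTheory GRing.Theory Num.Theory.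
Local Open Scope ring_scope.

Section Defs.
Variables (R : realType) (T Z : finType).

Definition Ou (u : T -> Z -> R) (a b : T) (z : Z) : R :=
  if u a z == u b z then 2^-1 else if u b z < u a z then 1 else 0.

Definition BC (u : T -> Z -> R) (P : Z -> R) (a : T) : R :=
  #|T|%:R^-1 * \sum_(b : T) \sum_(z : Z) P z * Ou u a b z.

Definition dirac_pt (zk : Z) (z : Z) : R := (z == zk)%:R.

Definition mixP (eps : R) (zk : Z) (Rd : Z -> R) (z : Z) : R :=
  (1 - eps) * (z == zk)%:R + eps * Rd z.

Definition gibbs (alpha : R) (f : T -> R) (t : T) : R :=
  expR (f t / alpha) / \sum_(t' : T) expR (f t' / alpha).

Definition is_distr (P : Z -> R) : Prop :=
  (forall z, 0 <= P z) /\ \sum_(z : Z) P z = 1.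

Definition KL (p q : T -> R) : R := \sum_(t : T) p t * ln (p t / q t).

End Defs.

(* KL between the Gibbs distributions of f and g at temperature alpha is the
   cumulant ln E_p[e^X] - E_p[X] of X = (g - f)/alpha under p = gibbs alpha f.
   Since BC is linear in the context distribution, g - f = eps (BC_Rd - BC),
   so X ranges in [-eps/alpha, eps/alpha] and Hoeffding's lemma bounds the
   cumulant by (2 eps/alpha)^2/8.  Convexity of exp reduces Hoeffding's lemma
   to ln (1 - th + th e^h) <= th h + h^2/8, whose two sides agree to first
   order at h = 0 while the second derivative of the left one is at most 1/4
   by AM-GM. *)

From mathcomp Require Import all_boot all_order all_algebra.
From mathcomp Require Import reals.
From mathcomp Require Import sequences exp.
From mathcomp Require Import normedtype derive realfun.
From mathcomp Require Import ring lra.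
Import Order.TTheory GRing.Theory Num.Theory.
Import numFieldNormedType.Exports.
Local Open Scope ring_scope.

Section hoeffding_lemma.
Context {R : realType}.

Definition bern_mgf (th y : R) : R := 1 - th + th * expR y.

Lemma bern_mgf_gt0 (th y : R) : 0 <= th <= 1 -> 0 < bern_mgf th y.
Proof. move=> /andP[th0 th1]; have := expR_gt0 y; rewrite /bern_mgf; nra. Qed.

Lemma is_derive_bern_mgf (th y : R) : is_derive y 1 (bern_mgf th) (th * expR y).
Proof. by apply: is_derive_eq; rewrite add0r mul1r. Qed.

Lemma bern_mgf_var_le (th y : R) : 0 <= th <= 1 ->
  (1 - th) * (th * expR y) / bern_mgf th y ^+ 2 <= 4^-1.
Proof.
move=> th01; have mgf_gt0 := bern_mgf_gt0 th y th01.
rewrite ler_pdivrMr ?exprn_gt0 // /bern_mgf.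
have := sqr_ge0 (1 - th - th * expR y); lra.
Qed.

Lemma ge0_of_derive_ge0 {f df : R -> R} {h : R} :
  (forall x : R, is_derive x 1 f (df x)) ->
  (forall x, 0 <= x <= h -> 0 <= df x) ->
  f 0 = 0 -> 0 <= h -> 0 <= f h.
Proof.
move=> f_df df_ge0 f0 h0; rewrite -f0.
apply: (@ger0_derive1_ndecr _ f 0 h) => //.
- move=> x; rewrite in_itv /= => /andP[x0 xh]; have fx := f_df x.
  by rewrite derive1E derive_val df_ge0 // !ltW.
- exact: derivable_within_continuous.
Qed.

Lemma ln_bern_mgf_le (th h : R) : 0 <= th <= 1 -> 0 <= h ->
  ln (bern_mgf th h) <= th * h + h ^+ 2 / 8.
Proof.
move=> th01 h0; have mgf_gt0 y := bern_mgf_gt0 th y th01.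
have mgf_neq0 y : bern_mgf th y != 0 by rewrite gt_eqF.
pose dG y := y / 4 + th - 1 + (1 - th) / bern_mgf th y.
pose G y := th * y + y ^+ 2 / 8 - ln (bern_mgf th y).
pose d2G y := 4^-1 - (1 - th) * (th * expR y) / bern_mgf th y ^+ 2.
(* Both derivatives are computed by typeclass resolution of [is_derive], which
   uses [mgf_y_neq0] and [is_derive_ln_mgf] from the context. *)
have is_derive_dG (y : R) : is_derive y 1 dG (d2G y).
  have mgf_y_neq0 := mgf_neq0 y; apply: is_derive_eq.
  by rewrite /GRing.scale /d2G /=; ring.
have is_derive_G (y : R) : is_derive y 1 G (dG y).
  have is_derive_ln_mgf : is_derive y 1 (fun z => ln (bern_mgf th z))
      ((bern_mgf th y)^-1 * (th * expR y)).
    exact: is_derive1_comp (is_derive1_ln (mgf_gt0 y)) (is_derive_bern_mgf th y).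
  apply: is_derive_eq; rewrite /GRing.scale /= /dG.
  have -> : th * expR y = bern_mgf th y - (1 - th) by rewrite /bern_mgf; ring.
  by field.
have dG_ge0 y : 0 <= y <= h -> 0 <= dG y.
  case/andP=> y0 yh; apply: (ge0_of_derive_ge0 is_derive_dG) => //.
  - by move=> x _; rewrite /d2G subr_ge0 bern_mgf_var_le.
  - by rewrite /dG /bern_mgf expR0 mulr1 subrK divr1; ring.
have := ge0_of_derive_ge0 is_derive_G dG_ge0.
rewrite /G subr_ge0; apply=> //.
by rewrite /bern_mgf expR0 mulr1 subrK ln1; ring.
Qed.

Lemma expR_le_chord {a b x : R} : a <= x <= b ->
  (b - a) * expR x <= (b - x) * expR a + (x - a) * expR b.
Proof.
case/andP=> ax xb.
have expR_tangent y : expR x * (1 + (y - x)) <= expR y.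
  have -> : expR y = expR x * expR (y - x) by rewrite -expRD subrKC.
  by rewrite ler_pM2l ?expR_gt0 // expR_ge1Dx.
have := expR_tangent a; have := expR_tangent b.
have : 0 <= b - x by lra.
have : 0 <= x - a by lra.
nra.
Qed.

Section hoeffding.
Context {T : finType} {p : T -> R}.
Hypotheses (p_ge0 : forall t, 0 <= p t) (p_sum1 : \sum_t p t = 1).

Let mean_cst (c : R) : \sum_t p t * c = c.
Proof. by rewrite -mulr_suml p_sum1 mul1r. Qed.

Let mean_affine (c d : R) (X : T -> R) :
  \sum_t p t * (c + d * X t) = c + d * \sum_t p t * X t.
Proof.
transitivity (\sum_t (c * p t + d * (p t * X t))); first by apply: eq_bigr => t _; ring.
by rewrite big_split /= -!mulr_sumr p_sum1 mulr1.
Qed.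

Let ler_mean (X Y : T -> R) : (forall t, X t <= Y t) ->
  \sum_t p t * X t <= \sum_t p t * Y t.
Proof. by move=> XY; apply: ler_sum => t _; rewrite ler_wpM2l. Qed.

Lemma hoeffding_expR (X : T -> R) (a b : R) : (forall t, a <= X t <= b) ->
  \sum_t p t * expR (X t) <= expR (\sum_t p t * X t + (b - a) ^+ 2 / 8).
Proof.
move=> X_itv; set m := \sum_t p t * X t.
have a_le_m : a <= m by rewrite -[a]mean_cst ler_mean // => t; case/andP: (X_itv t).
have m_le_b : m <= b by rewrite -[b]mean_cst ler_mean // => t; case/andP: (X_itv t).
have [eq_ab|ab] := eqVneq a b.
  subst b.
  have Xa t : X t = a by apply/eqP; rewrite eq_le andbC; exact: X_itv.
  have -> : m = a by rewrite /m; under eq_bigr do rewrite Xa; exact: mean_cst.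
  by under eq_bigr do rewrite Xa; rewrite mean_cst subrr expr0n mul0r addr0.
have ba_gt0 : 0 < b - a by rewrite subr_gt0 lt_def eq_sym ab (le_trans a_le_m).
set th := (m - a) / (b - a).
have th01 : 0 <= th <= 1.
  by apply/andP; split; [apply: divr_ge0 | rewrite ler_pdivrMr // mul1r]; lra.
have chord : (b - a) * \sum_t p t * expR (X t) <= (b - m) * expR a + (m - a) * expR b.
  have -> : (b - m) * expR a + (m - a) * expR b
      = \sum_t p t * ((b * expR a - a * expR b) + (expR b - expR a) * X t).
    by rewrite mean_affine -/m; ring.
  rewrite mulr_sumr; apply: ler_sum => t _; rewrite mulrCA ler_wpM2l //.
  rewrite [leRHS](_ : _ = (b - X t) * expR a + (X t - a) * expR b); last by ring.
  exact: expR_le_chord.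
have chordE : (b - m) * expR a + (m - a) * expR b
    = (b - a) * (expR a * bern_mgf th (b - a)).
  have -> : expR b = expR a * expR (b - a) by rewrite -expRD subrKC.
  rewrite /bern_mgf /th; field; lra.
have -> : expR (m + (b - a) ^+ 2 / 8)
    = expR a * expR (th * (b - a) + (b - a) ^+ 2 / 8).
  rewrite -expRD /th; congr expR; field; lra.
rewrite -(ler_pM2l ba_gt0) (le_trans chord) // chordE ler_pM2l // ler_pM2l ?expR_gt0 //.
by rewrite -ler_ln ?posrE ?expR_gt0 ?bern_mgf_gt0 // expRK ln_bern_mgf_le // ltW.
Qed.

Lemma hoeffding_ln {X : T -> R} {a b : R} : (forall t, a <= X t <= b) ->
  ln (\sum_t p t * expR (X t)) <= \sum_t p t * X t + (b - a) ^+ 2 / 8.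
Proof.
move=> X_itv; have mgf_gt0 : 0 < \sum_t p t * expR (X t).
  apply: lt_le_trans (expR_gt0 a) _; rewrite -[expR a]mean_cst ler_mean // => t.
  by rewrite ler_expR; case/andP: (X_itv t).
by rewrite -ler_expR lnK ?posrE // hoeffding_expR.
Qed.

End hoeffding.
End hoeffding_lemma.

Section gibbs.
Context {R : realType} {T : finType} (alpha : R).

Let partition_gt0 (f : T -> R) : T -> 0 < \sum_t expR (f t / alpha).
Proof.
move=> t0; rewrite (bigD1 t0) //= ltr_pwDl ?expR_gt0 ?sumr_ge0 // => *.
exact: expR_ge0.
Qed.

Lemma gibbs_ge0 (f : T -> R) (t : T) : 0 <= gibbs alpha f t.
Proof. by rewrite divr_ge0 ?sumr_ge0 // => *; exact: expR_ge0. Qed.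

Lemma gibbs_sum1 (f : T -> R) : T -> \sum_t gibbs alpha f t = 1.
Proof. by move=> t0; rewrite -mulr_suml mulfV // gt_eqF // partition_gt0. Qed.

Lemma KL_gibbs (f g : T -> R) : T -> alpha != 0 ->
  KL (gibbs alpha f) (gibbs alpha g)
  = ln (\sum_t gibbs alpha f t * expR ((g t - f t) / alpha))
    - \sum_t gibbs alpha f t * ((g t - f t) / alpha).
Proof.
move=> t0 alpha_neq0; pose X t := (g t - f t) / alpha.
have expR_g t : expR (g t / alpha) = expR (f t / alpha) * expR (X t).
  by rewrite -expRD /X; congr expR; field.
have Zf_gt0 := partition_gt0 f t0; have Zg_gt0 := partition_gt0 g t0.
set Zf := \sum_t expR (f t / alpha) in Zf_gt0 *.
set Zg := \sum_t expR (g t / alpha) in Zg_gt0 *.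
have ZgE : Zg / Zf = \sum_t gibbs alpha f t * expR (X t).
  rewrite mulr_suml; apply: eq_bigr => t _; rewrite expR_g /gibbs -/Zf; field.
  by rewrite gt_eqF.
rewrite /KL -ZgE -[ln _]mulr1 -(gibbs_sum1 f t0) mulr_sumr -sumrB.
apply: eq_bigr => t _; rewrite /gibbs -/Zf -/Zg expR_g.
have -> : expR (f t / alpha) / Zf / (expR (f t / alpha) * expR (X t) / Zg)
    = Zg / Zf * expR (- X t).
  by rewrite expRN; field; rewrite !gt_eqF ?expR_gt0.
by rewrite lnM ?posrE ?divr_gt0 ?expR_gt0 // expRK /X; ring.
Qed.

End gibbs.

Section borda_count.
Context {R : realType} {T Z : finType} (u : T -> Z -> R).

Lemma Ou_ge0 (a b : T) (z : Z) : 0 <= Ou u a b z.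
Proof. by rewrite /Ou; case: ifP => _; [|case: ifP => _]; rewrite ?invr_ge0 ?ler0n. Qed.

Lemma Ou_le1 (a b : T) (z : Z) : Ou u a b z <= 1.
Proof. by rewrite /Ou; case: ifP => _; [|case: ifP => _]; rewrite ?invf_le1 ?ler1n ?ler01. Qed.

Lemma BC_itv (P : Z -> R) (a : T) : is_distr P -> 0 <= BC u P a <= 1.
Proof.
case=> P_ge0 P_sum1.
have E_ge0 b : 0 <= \sum_z P z * Ou u a b z.
  by apply: sumr_ge0 => z _; rewrite mulr_ge0 ?Ou_ge0.
have E_le1 b : \sum_z P z * Ou u a b z <= 1.
  by rewrite -P_sum1 ler_sum // => z _; rewrite ler_piMr ?Ou_le1.
rewrite /BC mulr_ge0 ?invr_ge0 ?sumr_ge0 //=.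
have [->|T_gt0] := posnP #|T|; first by rewrite invr0 mul0r.
by rewrite mulrC ler_pdivrMr ?ltr0n // mul1r -sum1_card natr_sum ler_sum.
Qed.

Lemma BC_lincomb (k1 k2 : R) (P1 P2 : Z -> R) (a : T) :
  BC u (fun z => k1 * P1 z + k2 * P2 z) a = k1 * BC u P1 a + k2 * BC u P2 a.
Proof.
rewrite /BC mulrCA [k2 * _]mulrCA -mulrDr; congr (_ * _).
rewrite !mulr_sumr -big_split; apply: eq_bigr => b _.
by rewrite !mulr_sumr -big_split; apply: eq_bigr => z _; rewrite mulrDl !mulrA.
Qed.

Lemma BC_mixP (eps : R) (zk : Z) (Rd : Z -> R) (a : T) :
  BC u (mixP eps zk Rd) a = (1 - eps) * BC u (dirac_pt R zk) a + eps * BC u Rd a.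
Proof. exact: BC_lincomb. Qed.

Lemma is_distr_dirac (zk : Z) : is_distr (dirac_pt R zk).
Proof.
split=> [z|]; first by rewrite /dirac_pt ler0n.
by rewrite (bigD1 zk) //= /dirac_pt eqxx big1 ?addr0 // => z /negbTE ->.
Qed.

End borda_count.

Theorem mainTheorem7 (R : realType) (T Z : finType) (u : T -> Z -> R)
  (zk : Z) (eps : R) (Rd : Z -> R) (alpha : R) :
  0 <= eps <= 1 -> is_distr Rd -> 0 < alpha ->
  KL (gibbs alpha (BC u (dirac_pt R zk)))
     (gibbs alpha (BC u (mixP eps zk Rd)))
  <= eps ^+ 2 / (2 * alpha ^+ 2).
Proof.
move=> /andP[eps_ge0 eps_le1] Rd_distr alpha_gt0.
have [t0 _|T_empty] := pickP (fun _ : T => true); last first.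
  rewrite /KL big1 => [|t _]; last by have := T_empty t.
  by rewrite divr_ge0 ?sqr_ge0 // mulr_ge0 ?sqr_ge0.
set f := BC u (dirac_pt R zk); set g := BC u (mixP eps zk Rd).
pose X t := (g t - f t) / alpha.
have X_itv t : - (eps / alpha) <= X t <= eps / alpha.
  rewrite /X -mulNr !ler_pM2r ?invr_gt0 // /g BC_mixP -/f.
  have /andP[r_ge0 r_le1] := BC_itv u Rd t Rd_distr.
  have /andP[f_ge0 f_le1] : 0 <= f t <= 1 := BC_itv u _ t (is_distr_dirac zk).
  apply/andP; split; nra.
rewrite KL_gibbs ?gt_eqF // lerBlDl.
apply: le_trans (hoeffding_ln (gibbs_ge0 alpha f) (gibbs_sum1 alpha f t0) X_itv) _.
rewrite lerD2l.
suff -> : (eps / alpha - - (eps / alpha)) ^+ 2 / 8 = eps ^+ 2 / (2 * alpha ^+ 2) by [].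
by field; rewrite gt_eqF.
Qed.
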